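(* Let $d>k\geq1$, $\varepsilon\in(0,1)$, let $A\in\mathbb{R}^{d\times d}$ be symmetric positive semidefinite with $\lambda_k>\lambda_{k+1}$, $\beta>0$ with $\lambda_k>2\sqrt\beta\geq\lambda_{k+1}$, $X_0\in\mathrm{St}(d,k)$ with $\cos\theta_k(U_k,X_0)>0$, and consider ANPM with perturbations satisfying for all $t\geq0$: $\|U_{-k}^\top\Xi_t\|_2\leq c(\lambda_k-2\sqrt\beta)\varepsilon$ and $\|U_k^\top\Xi_t\|_2\leq c(\lambda_k-2\sqrt\beta)\cos\theta_k(U_k,X_t)$, $c=1/32$. Then for all $t\geq1$, $$H_{t+1}C_{t+1}=\Lambda_{-k}H_tC_t-\beta H_{t-1}C_{t-1}+\Psi_tC_t,$$ and $H_1C_1=\tfrac12\Lambda_{-k}H_0C_0+\Psi_0C_0$.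
   Context: $A$ has eigenvalues $\lambda_1\geq\dots\geq\lambda_d\geq0$, orthonormal eigenvectors $u_i$; $U_k:=[u_1..u_k]$, $U_{-k}:=[u_{k+1}..u_d]$, $\Lambda_k:=\mathrm{diag}(\lambda_1..\lambda_k)$, $\Lambda_{-k}:=\mathrm{diag}(\lambda_{k+1}..\lambda_d)$. QR: $Y=XR$, $X^\top X=I_k$, $R$ upper triangular with nonnegative diagonal; $\theta_k(U,X):=\arccos\sigma_{\min}(U^\top X)$. ANPM: $(X_1,R_1)=\mathrm{QR}(\tfrac12AX_0+\Xi_0)$; for $t\geq1$, $Y_{t+1}=AX_t-\beta X_{t-1}R_t^{-1}+\Xi_t$, $(X_{t+1},R_{t+1})=\mathrm{QR}(Y_{t+1})$. $H_t:=(U_{-k}^\top X_t)(U_k^\top X_t)^{-1}$; $\Psi_t:=(U_{-k}^\top\Xi_t)(U_k^\top X_t)^{-1}$; $E_t:=\Lambda_k^{-1}(U_k^\top\Xi_t)(U_k^\top X_t)^{-1}$; $G_0:=(I_k/2+E_0)^{-1}$, $G_{t+1}:=(I_k-\beta\Lambda_k^{-1}G_t\Lambda_k^{-1}+E_{t+1})^{-1}$; $C_0:=I_k$ and $C_t:=\Lambda_kG_{t-1}^{-1}\Lambda_kG_{t-2}^{-1}\cdots\Lambda_kG_0^{-1}$ for $t\geq1$. *)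

From HB Require Import structures.
From mathcomp Require Import all_boot all_order all_algebra.
From mathcomp Require Import classical_sets reals trigo.
Set Implicit Arguments. Unset Strict Implicit. Unset Printing Implicit Defensive.
Import Order.TTheory GRing.Theory Num.Theory.
Local Open Scope ring_scope.

Section Defs.
Variable R : realType.

Definition vnorm n (v : 'cV[R]_n) : R := Num.sqrt (\sum_i v i 0 ^+ 2).

Definition spec_norm p q (M : 'M[R]_(p, q)) : R :=
  sup [set vnorm (M *m v) | v in [set v : 'cV[R]_q | vnorm v = 1]]%classic.

Definition sigma_min p q (M : 'M[R]_(p, q)) : R :=
  inf [set vnorm (M *m v) | v in [set v : 'cV[R]_q | vnorm v = 1]]%classic.

Definition theta_k d k (U X : 'M[R]_(d, k)) : R := acos (sigma_min (U^T *m X)).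

Definition is_QR d k (Y X : 'M[R]_(d, k)) (Rm : 'M[R]_k) : Prop :=
  [/\ Y = X *m Rm, X^T *m X = 1%:M,
      (forall i j : 'I_k, (j < i)%N -> Rm i j = 0) &
      (forall i : 'I_k, 0 <= Rm i i)].

(* Notation of the paper, for d = k + m:  U_k = lsubmx U, U_{-k} = rsubmx U. *)
Variables (k m : nat) (U : 'M[R]_(k + m)) (lam : 'I_(k + m) -> R) (beta : R)
  (X Xi : nat -> 'M[R]_(k + m, k)).

Definition Lam_k : 'M[R]_k := diag_mx (\row_(i < k) lam (lshift m i)).
Definition Lam_mk : 'M[R]_m := diag_mx (\row_(j < m) lam (rshift k j)).

Definition H_ (t : nat) : 'M[R]_(m, k) :=
  ((rsubmx U)^T *m X t) *m invmx ((lsubmx U)^T *m X t).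
Definition Psi_ (t : nat) : 'M[R]_(m, k) :=
  ((rsubmx U)^T *m Xi t) *m invmx ((lsubmx U)^T *m X t).
Definition E_ (t : nat) : 'M[R]_k :=
  invmx Lam_k *m ((lsubmx U)^T *m Xi t) *m invmx ((lsubmx U)^T *m X t).

Fixpoint G_ (t : nat) : 'M[R]_k :=
  match t with
  | 0 => invmx (2^-1 *: 1%:M + E_ 0)
  | t'.+1 => invmx (1%:M - beta *: (invmx Lam_k *m G_ t' *m invmx Lam_k) + E_ t)
  end.

Fixpoint C_ (t : nat) : 'M[R]_k :=
  match t with
  | 0 => 1%:M
  | t'.+1 => Lam_k *m invmx (G_ t') *m C_ t'
  end.

End Defs.

(* 1-based access lambda_j (j in 1..n) to the eigenvalue family lam : 'I_n -> R
   (value 0 outside the valid range, never used there). *)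
Definition lambda_ (R : realType) n (lam : 'I_n -> R) (j : nat) : R :=
  match @insub nat (fun i => (i < n)%N) 'I_n j.-1 with Some i => lam i | None => 0 end.

From HB Require Import structures.
From mathcomp Require Import all_boot all_order all_algebra.
From mathcomp Require Import classical_sets reals trigo.
From mathcomp Require Import ring lra.
Import Order.TTheory GRing.Theory Num.Theory.
Local Open Scope ring_scope.
Set Implicit Arguments. Unset Strict Implicit. Unset Printing Implicit Defensive.

(* Write Z_t := U_k^T X_t and P_t := R_t ... R_1.  Projecting the ANPM recursion onto U_k
   gives Z_{t+1} P_{t+1} = Lam_k (Z_t P_t) - beta Z_{t-1} P_{t-1} + Lam_k E_t Z_t P_t, which is
   the three-term recursion satisfied by C_t, so Z_t P_t = C_t Z_0 for all t.  Along the way the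
   perturbation bound gives ||E_t|| <= e <= 1/32, and since lambda_k > 2 sqrt beta this keeps
   every G_t^{-1} bounded below by 1/2 - e, so all the inverses in the definitions exist.  Then
   H_t C_t = U_{-k}^T X_t P_t Z_0^{-1}, and projecting the recursion onto U_{-k} gives the two
   identities. *)

Section EuclideanNorm.
Variable R : realType.

Definition vdot n (u v : 'cV[R]_n) : R := \sum_i u i 0 * v i 0.

Lemma vdot_ge0 n (v : 'cV[R]_n) : 0 <= vdot v v.
Proof. by apply: sumr_ge0 => i _; rewrite -expr2 sqr_ge0. Qed.

Lemma vdotC n (u v : 'cV[R]_n) : vdot u v = vdot v u.
Proof. by apply: eq_bigr => i _; rewrite mulrC. Qed.

Lemma vdotZl n a (u v : 'cV[R]_n) : vdot (a *: u) v = a * vdot u v.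
Proof. by rewrite /vdot mulr_sumr; apply: eq_bigr => i _; rewrite mxE mulrA. Qed.

Lemma vdotZr n a (u v : 'cV[R]_n) : vdot u (a *: v) = a * vdot u v.
Proof. by rewrite vdotC vdotZl vdotC. Qed.

Lemma vdotDl n (u w v : 'cV[R]_n) : vdot (u + w) v = vdot u v + vdot w v.
Proof. by rewrite /vdot -big_split; apply: eq_bigr => i _; rewrite mxE mulrDl. Qed.

Lemma vdotDr n (u w v : 'cV[R]_n) : vdot v (u + w) = vdot v u + vdot v w.
Proof. by rewrite vdotC vdotDl !(vdotC v). Qed.

Lemma vdot_mx n (u v : 'cV[R]_n) : vdot u v = (u^T *m v) 0 0.
Proof. by rewrite mxE; apply: eq_bigr => i _; rewrite mxE. Qed.

Lemma vnorm_ge0 n (v : 'cV[R]_n) : 0 <= vnorm v.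
Proof. exact: sqrtr_ge0. Qed.

Lemma vnorm_sqr n (v : 'cV[R]_n) : vnorm v ^+ 2 = vdot v v.
Proof.
rewrite sqr_sqrtr; last by apply: sumr_ge0 => i _; exact: sqr_ge0.
by apply: eq_bigr => i _; rewrite expr2.
Qed.

Lemma vnorm_le n p (u : 'cV[R]_n) (v : 'cV[R]_p) :
  vdot u u <= vdot v v -> vnorm u <= vnorm v.
Proof. by rewrite -!vnorm_sqr ler_pXn2r // nnegrE vnorm_ge0. Qed.

Lemma vnorm_eq0 n (v : 'cV[R]_n) : (vnorm v == 0) = (v == 0).
Proof.
apply/eqP/eqP => [v0|->]; last by rewrite /vnorm big1 ?sqrtr0 // => i _; rewrite mxE expr0n.
have vv0 : vdot v v = 0 by rewrite -vnorm_sqr v0 expr0n.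
apply/matrixP => i j; rewrite (ord1 j) mxE.
have sq_ge0 (l : 'I_n) : true -> 0 <= v l 0 * v l 0 by rewrite -expr2 sqr_ge0.
by have /eqP := psumr_eq0P sq_ge0 vv0 (i := i) isT; rewrite mulf_eq0 orbb => /eqP.
Qed.

Lemma vnorm_gt0 n (v : 'cV[R]_n) : (0 < vnorm v) = (v != 0).
Proof. by rewrite lt0r vnorm_eq0 vnorm_ge0 andbT. Qed.

Lemma vnorm0 n : vnorm (0 : 'cV[R]_n) = 0.
Proof. by apply/eqP; rewrite vnorm_eq0. Qed.

Lemma vnormZ n a (v : 'cV[R]_n) : vnorm (a *: v) = `|a| * vnorm v.
Proof.
rewrite /vnorm (eq_bigr (fun i => a ^+ 2 * v i 0 ^+ 2)) => [|i _]; last first.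
  by rewrite mxE exprMn.
by rewrite -mulr_sumr sqrtrM ?sqr_ge0 // sqrtr_sqr.
Qed.

Lemma vnormN n (v : 'cV[R]_n) : vnorm (- v) = vnorm v.
Proof. by rewrite -scaleN1r vnormZ normrN1 mul1r. Qed.

Lemma vnorm_normalize n (v : 'cV[R]_n) : v != 0 -> vnorm ((vnorm v)^-1 *: v) = 1.
Proof.
rewrite -vnorm_gt0 => v_gt0.
by rewrite vnormZ ger0_norm ?invr_ge0 ?vnorm_ge0 // mulVf // gt_eqF.
Qed.

Lemma cauchy_schwarz n (u v : 'cV[R]_n) : vdot u v <= vnorm u * vnorm v.
Proof.
have [->|u_neq0] := eqVneq u 0.
  by rewrite vnorm0 mul0r /vdot big1 // => i _; rewrite mxE mul0r.
have [->|v_neq0] := eqVneq v 0.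
  by rewrite vnorm0 mulr0 /vdot big1 // => i _; rewrite mxE mulr0.
set a := vnorm u; set b := vnorm v.
have ab_gt0 : 0 < a * b by rewrite mulr_gt0 ?vnorm_gt0.
have := vdot_ge0 (b *: u - a *: v).
rewrite -scaleNr vdotDl !vdotDr !vdotZl !vdotZr -!vnorm_sqr -/a -/b (vdotC v u).
have -> : b * (b * a ^+ 2) + b * (- a * vdot u v) +
          (- a * (b * vdot u v) + - a * (- a * b ^+ 2))
          = 2 * (a * b) * (a * b - vdot u v) by ring.
by rewrite pmulr_rge0 ?subr_ge0 // mulr_gt0.
Qed.

Lemma vnormD n (u v : 'cV[R]_n) : vnorm (u + v) <= vnorm u + vnorm v.
Proof.
rewrite -(@ler_pXn2r _ 2) ?nnegrE ?addr_ge0 ?vnorm_ge0 //.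
rewrite vnorm_sqr vdotDl !vdotDr -!vnorm_sqr (vdotC v u).
by have := cauchy_schwarz u v; lra.
Qed.

Lemma vnormDN n (u v : 'cV[R]_n) : vnorm u - vnorm v <= vnorm (u + v).
Proof. by have := vnormD (u + v) (- v); rewrite addrK vnormN; lra. Qed.

Lemma abs_le_vnorm n (v : 'cV[R]_n) i : `|v i 0| <= vnorm v.
Proof.
rewrite -sqrtr_sqr ler_sqrt; last by apply: sumr_ge0 => j _; exact: sqr_ge0.
by rewrite (bigD1 i) //= lerDl; apply: sumr_ge0 => j _; exact: sqr_ge0.
Qed.

Lemma vnorm_le_l1 n (v : 'cV[R]_n) : vnorm v <= \sum_i `|v i 0|.
Proof.
rewrite -(@ler_pXn2r _ 2) ?nnegrE ?vnorm_ge0 ?sumr_ge0 //.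
rewrite vnorm_sqr expr2 mulr_suml; apply: ler_sum => i _.
rewrite mulr_sumr (bigD1 i) //= -normrM ler_wpDr ?real_ler_norm ?realM ?num_real //.
by apply: sumr_ge0 => j _; rewrite -normrM.
Qed.

Lemma vnorm_isometry p q (M : 'M[R]_(p, q)) (v : 'cV[R]_q) :
  M^T *m M = 1%:M -> vnorm (M *m v) = vnorm v.
Proof.
move=> MtM; have vdotM : vdot (M *m v) (M *m v) = vdot v v.
  by rewrite !vdot_mx trmx_mul mulmxA -(mulmxA _ M^T) MtM mulmx1.
by apply/eqP; rewrite eq_le !vnorm_le ?vdotM.
Qed.

Lemma vnorm_usubmx p q (v : 'cV[R]_(p + q)) : vnorm (usubmx v) <= vnorm v.
Proof.
apply: vnorm_le; rewrite [vdot v v]big_split_ord /=.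
have -> : vdot (usubmx v) (usubmx v) = \sum_i v (lshift q i) 0 * v (lshift q i) 0.
  by apply: eq_bigr => i _; rewrite mxE.
by rewrite lerDl; apply: sumr_ge0 => i _; rewrite -expr2 sqr_ge0.
Qed.

End EuclideanNorm.

Section OperatorBounds.
Variable R : realType.

Definition mx_bound p q (M : 'M[R]_(p, q)) (b : R) :=
  forall v : 'cV[R]_q, vnorm (M *m v) <= b * vnorm v.

Definition mx_lbound p q (M : 'M[R]_(p, q)) (c : R) :=
  forall v : 'cV[R]_q, c * vnorm v <= vnorm (M *m v).

Lemma mx_boundM p q r (A : 'M[R]_(p, q)) (B : 'M[R]_(q, r)) a b :
  0 <= a -> mx_bound A a -> mx_bound B b -> mx_bound (A *m B) (a * b).
Proof.
move=> a_ge0 hA hB v; rewrite -mulmxA -mulrA.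
by apply: le_trans (hA _) _; rewrite ler_wpM2l.
Qed.

Lemma mx_boundD p q (A B : 'M[R]_(p, q)) a b :
  mx_bound A a -> mx_bound B b -> mx_bound (A + B) (a + b).
Proof.
move=> hA hB v; rewrite mulmxDl mulrDl.
by apply: le_trans (vnormD _ _) _; rewrite lerD.
Qed.

Lemma mx_boundZ p q (A : 'M[R]_(p, q)) a c : mx_bound A a -> mx_bound (c *: A) (`|c| * a).
Proof. by move=> hA v; rewrite -scalemxAl vnormZ -mulrA ler_wpM2l. Qed.

Lemma mx_boundN p q (A : 'M[R]_(p, q)) a : mx_bound A a -> mx_bound (- A) a.
Proof. by move=> hA v; rewrite mulNmx vnormN. Qed.

Lemma mx_bound_l1 p q (M : 'M[R]_(p, q)) : mx_bound M (\sum_i \sum_j `|M i j|).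
Proof.
move=> v; apply: le_trans (vnorm_le_l1 _) _.
rewrite mulr_suml; apply: ler_sum => i _; rewrite mxE.
apply: le_trans (ler_norm_sum _ _ _) _; rewrite mulr_suml; apply: ler_sum => j _.
by rewrite normrM ler_wpM2l ?abs_le_vnorm.
Qed.

Lemma mx_bound_spec_norm p q (M : 'M[R]_(p, q)) b : spec_norm M <= b -> mx_bound M b.
Proof.
move=> Mb v; have [->|v_neq0] := eqVneq v 0; first by rewrite mulmx0 !vnorm0 mulr0.
have v_gt0 : 0 < vnorm v by rewrite vnorm_gt0.
have bounded : has_ubound [set vnorm (M *m u) | u in [set u | vnorm u = 1]]%classic.
  by exists (\sum_i \sum_j `|M i j|) => _ [u u1 <-]; rewrite -[leRHS]mulr1 -u1 mx_bound_l1.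
have : vnorm (M *m ((vnorm v)^-1 *: v)) <= spec_norm M.
  by apply: ub_le_sup => //; exists ((vnorm v)^-1 *: v) => //; rewrite /= vnorm_normalize.
rewrite -scalemxAr vnormZ ger0_norm ?invr_ge0 ?vnorm_ge0 // ler_pdivrMl // => Mv_le.
by apply: le_trans Mv_le _; rewrite [b * _]mulrC ler_wpM2l ?vnorm_ge0.
Qed.

Lemma lbound_unitmx n (M : 'M[R]_n) c : 0 < c -> mx_lbound M c -> M \in unitmx.
Proof.
move=> c_gt0 hM; rewrite -unitmx_tr -row_free_unit; apply: inj_row_free => u uM0.
have Mu0 : M *m u^T = 0 by rewrite -[M]trmxK -trmx_mul uM0 trmx0.
have := hM u^T; rewrite Mu0 vnorm0 pmulr_rle0 // => u_le0.
by apply/trmx_inj/eqP; rewrite trmx0 -vnorm_eq0 eq_le u_le0 vnorm_ge0.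
Qed.

Lemma lbound_invmx n (M : 'M[R]_n) c : 0 < c -> mx_lbound M c -> mx_bound (invmx M) c^-1.
Proof.
move=> c_gt0 hM v; have := hM (invmx M *m v).
by rewrite mulKVmx ?(lbound_unitmx c_gt0) // ler_pdivlMl.
Qed.

Lemma lbound_add_scalar n (B : 'M[R]_n) a c :
  0 <= a -> mx_bound B c -> mx_lbound (a *: 1%:M + B) (a - c).
Proof.
move=> a_ge0 hB v; rewrite mulmxDl -scalemxAl mul1mx.
by apply: le_trans (vnormDN _ _); rewrite vnormZ ger0_norm // mulrBl lerB.
Qed.

Lemma exists_unit_vector q : (0 < q)%N -> exists u : 'cV[R]_q, vnorm u = 1.
Proof.
move=> q_gt0; have c_neq0 : const_mx 1 != 0 :> 'cV[R]_q.
  by apply/eqP => /matrixP/(_ (Ordinal q_gt0) 0); rewrite !mxE => /eqP; rewrite oner_eq0.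
by exists ((vnorm (const_mx 1 : 'cV[R]_q))^-1 *: const_mx 1); rewrite vnorm_normalize.
Qed.

Section SigmaMin.
Variables (p q : nat) (M : 'M[R]_(p, q)).

Let sphere_image := [set vnorm (M *m u) | u in [set u : 'cV[R]_q | vnorm u = 1]]%classic.

Let sphere_image_lbound : has_lbound sphere_image.
Proof. by exists 0 => _ [u _ <-]; exact: vnorm_ge0. Qed.

Lemma sigma_min_le u : vnorm u = 1 -> sigma_min M <= vnorm (M *m u).
Proof. by move=> u1; apply: (ge_inf sphere_image_lbound); exists u. Qed.

Lemma sigma_min_ge0 : (0 < q)%N -> 0 <= sigma_min M.
Proof.
move=> /exists_unit_vector[u u1]; apply: lb_le_inf => [|_ [v _ <-]]; last exact: vnorm_ge0.
by exists (vnorm (M *m u)), u.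
Qed.

Lemma sigma_min_lbound : mx_lbound M (sigma_min M).
Proof.
move=> v; have [->|v_neq0] := eqVneq v 0; first by rewrite mulmx0 !vnorm0 mulr0.
have v_gt0 : 0 < vnorm v by rewrite vnorm_gt0.
have := sigma_min_le (vnorm_normalize v_neq0).
by rewrite -scalemxAr vnormZ ger0_norm ?invr_ge0 ?vnorm_ge0 // ler_pdivlMl // mulrC.
Qed.

End SigmaMin.

Lemma cos_theta_k d k (U X : 'M[R]_(d, k)) : (0 < k)%N -> mx_bound (U^T *m X) 1 ->
  cos (theta_k U X) = sigma_min (U^T *m X).
Proof.
move=> k_gt0 contr; have s_ge0 := sigma_min_ge0 (U^T *m X) k_gt0.
have [u u1] := exists_unit_vector k_gt0.
have s_le1 : sigma_min (U^T *m X) <= 1.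
  by apply: le_trans (sigma_min_le _ u1) _; have := contr u; rewrite u1 mulr1.
by rewrite /theta_k acosK // in_itv /= s_le1 (le_trans _ s_ge0) ?lerN10.
Qed.

End OperatorBounds.

Lemma mulmx_eigenvectors (R : comPzRingType) n (A U : 'M[R]_n) (lam : 'I_n -> R) :
  (forall i, A *m col i U = lam i *: col i U) -> A *m U = U *m diag_mx (\row_i lam i).
Proof.
move=> eigen; apply/matrixP => i j; rewrite mul_mx_diag !mxE mulrC.
have := congr1 (fun v : 'cV_n => v i 0) (eigen j); rewrite !mxE => <-.
by apply: eq_bigr => l _; rewrite mxE.
Qed.

Lemma anpm_constants (R : realFieldType) (l s : R) : 0 <= s -> 2 * s < l ->
  let e := l^-1 * (32^-1 * (l - 2 * s)) in
  [/\ 0 <= e, e <= 32^-1 & s ^+ 2 <= 2^-1 * (2^-1 - e) * l ^+ 2].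
Proof.
move=> s_ge0 sl e; have l_gt0 : 0 < l by lra.
have el_eq : e * l = 32^-1 * (l - 2 * s) by rewrite /e mulrAC mulVf ?mul1r ?gt_eqF.
have e_ge0 : 0 <= e by apply: mulr_ge0; [rewrite invr_ge0 | apply: mulr_ge0]; lra.
split=> //; first by rewrite -(ler_pM2r l_gt0) el_eq; lra.
have -> : 2^-1 * (2^-1 - e) * l ^+ 2 = 4^-1 * l ^+ 2 - 2^-1 * (e * l) * l.
  by rewrite expr2; field.
(* the claim is now (2 s - l) (32 s + 15 l) <= 0 *)
rewrite el_eq; nra.
Qed.

Section ANPM.
Variables (R : realType) (k m : nat) (beta : R) (A U : 'M[R]_(k + m))
  (lam : 'I_(k + m) -> R) (X Xi : nat -> 'M[R]_(k + m, k)) (Rs : nat -> 'M[R]_k).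
Hypotheses (k_gt0 : (0 < k)%N) (A_sym : A^T = A) (U_orth : U^T *m U = 1%:M)
  (U_eigen : forall i, A *m col i U = lam i *: col i U)
  (lam_nonincr : forall i j : 'I_(k + m), (i <= j)%N -> lam j <= lam i)
  (beta_gt0 : 0 < beta) (gap : 2 * Num.sqrt beta < lambda_ lam k)
  (X0_orth : (X 0%N)^T *m X 0%N = 1%:M)
  (cos0_gt0 : 0 < cos (theta_k (lsubmx U) (X 0%N)))
  (QR0 : is_QR (2^-1 *: (A *m X 0%N) + Xi 0%N) (X 1%N) (Rs 1%N))
  (QRS : forall t, (1 <= t)%N ->
     is_QR (A *m X t - beta *: (X t.-1 *m invmx (Rs t)) + Xi t) (X t.+1) (Rs t.+1))
  (Xi_bound : forall t, spec_norm ((lsubmx U)^T *m Xi t)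
     <= 32^-1 * (lambda_ lam k - 2 * Num.sqrt beta) * cos (theta_k (lsubmx U) (X t))).

Local Notation Uk := (lsubmx U).
Local Notation Um := (rsubmx U).
Local Notation lk := (lambda_ lam k).
Local Notation L := (Lam_k lam).
Local Notation Z t := (Uk^T *m X t).
Local Notation E t := (E_ U lam X Xi t).
Local Notation G t := (G_ U lam beta X Xi t).
Local Notation C t := (C_ U lam beta X Xi t).

Fixpoint Rprod t : 'M[R]_k := if t is t'.+1 then Rs t *m Rprod t' else 1%:M.

Definition Ginv t : 'M[R]_k :=
  if t is t'.+1 then 1%:M - beta *: (invmx L *m G t' *m invmx L) + E t
  else 2^-1 *: 1%:M + E 0%N.

Lemma G_invmx t : G t = invmx (Ginv t). Proof. by case: t. Qed.

Lemma C_S t : C t.+1 = L *m Ginv t *m C t.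
Proof. by rewrite /= G_invmx invmxK. Qed.

Lemma lambda_k_le i : lk <= lam (lshift m i).
Proof.
have lt_k : (k.-1 < k + m)%N by rewrite -(prednK k_gt0) addSn ltnS leq_addr.
rewrite /lambda_ (insubT (fun i => (i < k + m)%N) lt_k) /=; apply: lam_nonincr => /=.
by rewrite -ltnS prednK.
Qed.

Lemma lambda_k_gt0 : 0 < lk.
Proof. by apply: le_lt_trans gap; rewrite mulr_ge0 ?sqrtr_ge0. Qed.

Lemma trUk_mulA : Uk^T *m A = L *m Uk^T.
Proof.
apply: trmx_inj; rewrite !trmx_mul trmxK A_sym tr_diag_mx mulmx_lsub.
by rewrite (mulmx_eigenvectors U_eigen); apply/matrixP => i j; rewrite !mul_mx_diag !mxE.
Qed.

Lemma trUm_mulA : Um^T *m A = Lam_mk lam *m Um^T.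
Proof.
apply: trmx_inj; rewrite !trmx_mul trmxK A_sym tr_diag_mx mulmx_rsub.
by rewrite (mulmx_eigenvectors U_eigen); apply/matrixP => i j; rewrite !mul_mx_diag !mxE.
Qed.

Lemma X_orth t : (X t)^T *m X t = 1%:M.
Proof. by case: t => [|[|t]] //; [case: QR0 | case: (QRS (ltn0Sn t))]. Qed.

Lemma Z_contraction t : mx_bound (Z t) 1.
Proof.
have U_isometry : (U^T)^T *m U^T = 1%:M by rewrite trmxK mulmx1C.
move=> v; rewrite mul1r -mulmxA -(vnorm_isometry v (X_orth t)).
have -> : Uk^T *m (X t *m v) = usubmx (U^T *m (X t *m v)).
  by rewrite -{2}(hsubmxK U) tr_row_mx mul_col_mx col_mxKu.
by rewrite -[leRHS](vnorm_isometry _ U_isometry) vnorm_usubmx.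
Qed.

Lemma cos_theta_Z t : cos (theta_k Uk (X t)) = sigma_min (Z t).
Proof. exact: cos_theta_k k_gt0 (Z_contraction t). Qed.

Lemma Z0_unit : Z 0%N \in unitmx.
Proof. by apply: (lbound_unitmx _ (sigma_min_lbound _)); rewrite -cos_theta_Z. Qed.

Lemma L_lbound : mx_lbound L lk.
Proof.
have lk_ge0 := ltW lambda_k_gt0.
move=> v; rewrite -(ger0_norm lk_ge0) -vnormZ; apply: vnorm_le.
apply: ler_sum => i _; rewrite mul_diag_mx !mxE -!expr2 !exprMn ler_wpM2r ?sqr_ge0 //.
by rewrite ler_sqr ?nnegrE ?lambda_k_le ?(le_trans lk_ge0 (lambda_k_le i)).
Qed.

Lemma L_unit : L \in unitmx.
Proof. exact: lbound_unitmx lambda_k_gt0 L_lbound. Qed.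

Lemma invL_bound : mx_bound (invmx L) lk^-1.
Proof. exact: lbound_invmx lambda_k_gt0 L_lbound. Qed.

(* [e] bounds every [E t], and [K] every [G t]. *)
Let e := lk^-1 * (32^-1 * (lk - 2 * Num.sqrt beta)).
Let K := (2^-1 - e)^-1.

Lemma e_facts : [/\ 0 <= e, e <= 32^-1 & beta <= 2^-1 * (2^-1 - e) * lk ^+ 2].
Proof. by have := anpm_constants (sqrtr_ge0 beta) gap; rewrite /= sqr_sqrtr // ltW. Qed.

Lemma half_sub_e_gt0 : 0 < 2^-1 - e.
Proof. by case: e_facts => _ e_le _; lra. Qed.

Lemma E_bound t : Z t \in unitmx -> mx_bound (E t) e.
Proof.
move=> Z_unit y; have lk_gt0 := lambda_k_gt0.
rewrite /E_ -!mulmxA /e -mulrA; apply: le_trans (invL_bound _) _.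
rewrite ler_wpM2l ?invr_ge0 ?(ltW lk_gt0) // mulmxA.
apply: le_trans (mx_bound_spec_norm (Xi_bound t) _) _.
rewrite cos_theta_Z -[leLHS]mulrA ler_wpM2l ?mulr_ge0 ?invr_ge0 ?subr_ge0 ?(ltW gap) //.
by rewrite -{2}(mulKVmx Z_unit y) sigma_min_lbound.
Qed.

Lemma Ginv_unit_G_bound t : mx_lbound (Ginv t) (2^-1 - e) ->
  Ginv t \in unitmx /\ mx_bound (G t) K.
Proof.
move=> lb; rewrite G_invmx.
by split; [exact: lbound_unitmx half_sub_e_gt0 lb | exact: lbound_invmx half_sub_e_gt0 lb].
Qed.

Lemma Ginv0_lbound : mx_lbound (Ginv 0%N) (2^-1 - e).
Proof. by apply: lbound_add_scalar; [rewrite invr_ge0 | exact: E_bound Z0_unit]. Qed.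

Lemma beta_K_le : beta * (lk^-1 * K * lk^-1) <= 2^-1.
Proof.
have [_ _ beta_le] := e_facts; have lk_gt0 := lambda_k_gt0.
have -> : beta * (lk^-1 * K * lk^-1) = beta / ((2^-1 - e) * lk ^+ 2).
  rewrite /K; field; rewrite gt_eqF //= gt_eqF //.
  by have := half_sub_e_gt0; lra.
by rewrite ler_pdivrMr ?mulr_gt0 ?exprn_gt0 ?half_sub_e_gt0 // mulrA.
Qed.

Lemma invL_G_invL_bound t : mx_bound (G t) K ->
  mx_bound (invmx L *m G t *m invmx L) (lk^-1 * K * lk^-1).
Proof.
move=> G_le; have lk_ge0 := ltW lambda_k_gt0.
have K_ge0 : 0 <= K by rewrite invr_ge0 ltW ?half_sub_e_gt0.
have invL_G : mx_bound (invmx L *m G t) (lk^-1 * K).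
  by apply: (mx_boundM _ invL_bound G_le); rewrite invr_ge0.
by apply: (mx_boundM _ invL_G invL_bound); rewrite mulr_ge0 // invr_ge0.
Qed.

Lemma GinvS_lbound t : mx_bound (G t) K -> Z t.+1 \in unitmx ->
  mx_lbound (Ginv t.+1) (2^-1 - e).
Proof.
move=> G_le Z_unit.
have rest : mx_bound (- (beta *: (invmx L *m G t *m invmx L)) + E t.+1)
                     (beta * (lk^-1 * K * lk^-1) + e).
  have := mx_boundD (mx_boundN (mx_boundZ beta (invL_G_invL_bound G_le))) (E_bound Z_unit).
  by rewrite (ger0_norm (ltW beta_gt0)).
have -> : Ginv t.+1 = 1 *: 1%:M + (- (beta *: (invmx L *m G t *m invmx L)) + E t.+1).
  by rewrite scale1r addrA.
move=> v; apply: le_trans (lbound_add_scalar ler01 rest v).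
by rewrite ler_wpM2r ?vnorm_ge0 //; have := beta_K_le; lra.
Qed.

Lemma QR_step_proj p (V : 'M[R]_(k + m, p)) (D : 'M[R]_p) t :
  V^T *m A = D *m V^T -> Rs t.+1 \in unitmx ->
  V^T *m X t.+2 *m Rprod t.+2
  = D *m (V^T *m X t.+1 *m Rprod t.+1) - beta *: (V^T *m X t *m Rprod t)
    + V^T *m Xi t.+1 *m Rprod t.+1.
Proof.
move=> VA R_unit; have [/= Y_eq _ _ _] := QRS (ltn0Sn t).
rewrite mulmxA -(mulmxA V^T) -Y_eq !mulmxDr !mulmxDl mulmxN mulNmx (mulmxA V^T A) VA.
by rewrite -!scalemxAr -!scalemxAl -!mulmxA mulKmx.
Qed.

Lemma QR_first_proj p (V : 'M[R]_(k + m, p)) (D : 'M[R]_p) :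
  V^T *m A = D *m V^T ->
  V^T *m X 1%N *m Rprod 1 = 2^-1 *: (D *m (V^T *m X 0%N)) + V^T *m Xi 0%N.
Proof.
move=> VA; have [Y_eq _ _ _] := QR0.
by rewrite /= mulmx1 -mulmxA -Y_eq mulmxDr -scalemxAr !mulmxA VA.
Qed.

Lemma trUk_Xi t : Z t \in unitmx -> Uk^T *m Xi t = L *m E t *m Z t.
Proof. by move=> Z_unit; rewrite -mulmxA /E_ mulmxKV // mulmxA mulmxV ?L_unit // mul1mx. Qed.

Lemma C_SS t : Ginv t \in unitmx ->
  C t.+2 = L *m (1%:M + E t.+1) *m C t.+1 - beta *: C t.
Proof.
move=> Ginv_unit; rewrite C_S [Ginv t.+1]/= addrAC !mulmxDr !mulmxDl mulmxN mulNmx.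
rewrite -scalemxAr -scalemxAl; congr (_ - _ *: _).
by rewrite C_S !mulmxA mulmxV ?L_unit // mul1mx mulmxKV ?L_unit // G_invmx mulVmx // mul1mx.
Qed.

Lemma ZP_eq1 : Z 1%N *m Rprod 1 = C 1 *m Z 0%N.
Proof.
rewrite (QR_first_proj trUk_mulA) (trUk_Xi Z0_unit) C_S /= mulmx1.
by rewrite mulmxDr mulmxDl -scalemxAr -scalemxAl mulmx1 -!mulmxA.
Qed.

Lemma ZP_eqSS t : Rs t.+1 \in unitmx -> Z t.+1 \in unitmx -> Ginv t \in unitmx ->
  Z t *m Rprod t = C t *m Z 0%N -> Z t.+1 *m Rprod t.+1 = C t.+1 *m Z 0%N ->
  Z t.+2 *m Rprod t.+2 = C t.+2 *m Z 0%N.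
Proof.
move=> R_unit Z_unit Ginv_unit ZP ZP1.
rewrite (QR_step_proj trUk_mulA R_unit) ZP1 ZP (trUk_Xi Z_unit).
rewrite -(mulmxA (L *m E t.+1)) ZP1 (C_SS Ginv_unit).
rewrite mulmxBl mulmxDr mulmxDl mulmx1 -scalemxAl.
by rewrite mulmxDl addrAC (mulmxA L) (mulmxA (L *m E t.+1)).
Qed.

Definition anpm_invariant t := [/\ Z t *m Rprod t = C t *m Z 0%N,
  Rprod t \in unitmx, C t \in unitmx & mx_lbound (Ginv t) (2^-1 - e)].

Lemma invariant_Z_unit t : anpm_invariant t -> Z t \in unitmx.
Proof.
case=> ZP _ C_unit _; have : Z t *m Rprod t \in unitmx by rewrite ZP unitmx_mul C_unit Z0_unit.
by rewrite unitmx_mul => /andP[].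
Qed.

Lemma invariant_Rs_unit t : anpm_invariant t.+1 -> Rs t.+1 \in unitmx.
Proof. by case=> _ /=; rewrite unitmx_mul => /andP[]. Qed.

Lemma invariant0 : anpm_invariant 0.
Proof. by split; rewrite ?mulmx1 ?mul1mx ?unitmx1 //; exact: Ginv0_lbound. Qed.

Lemma invariant_next t : anpm_invariant t ->
  Z t.+1 *m Rprod t.+1 = C t.+1 *m Z 0%N -> anpm_invariant t.+1.
Proof.
move=> inv ZP1; case: (inv) => _ P_unit C_unit /Ginv_unit_G_bound[Ginv_unit G_le].
have C1_unit : C t.+1 \in unitmx by rewrite C_S !unitmx_mul L_unit Ginv_unit.
have : Z t.+1 *m Rprod t.+1 \in unitmx by rewrite ZP1 unitmx_mul C1_unit Z0_unit.
rewrite [Rprod _]/= mulmxA !unitmx_mul => /andP[/andP[Z_unit R_unit] _].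
by split; rewrite //= ?unitmx_mul ?R_unit //; exact: GinvS_lbound.
Qed.

Lemma invariant_all t : anpm_invariant t /\ anpm_invariant t.+1.
Proof.
elim: t => [|t [inv inv1]].
  by split; [exact: invariant0 | exact: invariant_next invariant0 ZP_eq1].
have [ZP _ _ /Ginv_unit_G_bound[Ginv_unit _]] := inv; have [ZP1 _ _ _] := inv1.
split=> //; apply: (invariant_next inv1).
exact: ZP_eqSS (invariant_Rs_unit inv1) (invariant_Z_unit inv1) Ginv_unit ZP ZP1.
Qed.

Lemma C_eq t : C t = Z t *m Rprod t *m invmx (Z 0%N).
Proof. by case: (invariant_all t) => -[-> _ _ _] _; rewrite mulmxK ?Z0_unit. Qed.

Lemma HC_eq t : H_ U X t *m C t = Um^T *m X t *m Rprod t *m invmx (Z 0%N).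
Proof.
have Z_unit := invariant_Z_unit (proj1 (invariant_all t)).
by rewrite /H_ C_eq mulmxA mulmxA mulmxKV.
Qed.

Lemma PsiC_eq t : Psi_ U X Xi t *m C t = Um^T *m Xi t *m Rprod t *m invmx (Z 0%N).
Proof.
have Z_unit := invariant_Z_unit (proj1 (invariant_all t)).
by rewrite /Psi_ C_eq mulmxA mulmxA mulmxKV.
Qed.

Lemma HC_rec t :
  H_ U X t.+2 *m C t.+2
  = Lam_mk lam *m H_ U X t.+1 *m C t.+1 - beta *: (H_ U X t *m C t)
    + Psi_ U X Xi t.+1 *m C t.+1.
Proof.
have R_unit := invariant_Rs_unit (proj2 (invariant_all t)).
rewrite -mulmxA !HC_eq PsiC_eq (QR_step_proj trUm_mulA R_unit).
by rewrite mulmxDl mulmxBl -scalemxAl !mulmxA.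
Qed.

Lemma HC_rec0 :
  H_ U X 1%N *m C 1%N
  = 2^-1 *: (Lam_mk lam *m H_ U X 0%N *m C 0%N) + Psi_ U X Xi 0%N *m C 0%N.
Proof.
rewrite -mulmxA !HC_eq PsiC_eq (QR_first_proj trUm_mulA) /= !mulmx1.
by rewrite mulmxDl -scalemxAl !mulmxA.
Qed.

Lemma HC_recurrences :
  (forall t, (1 <= t)%N ->
     H_ U X t.+1 *m C t.+1
     = Lam_mk lam *m H_ U X t *m C t - beta *: (H_ U X t.-1 *m C t.-1)
       + Psi_ U X Xi t *m C t)
  /\ H_ U X 1%N *m C 1%N
     = 2^-1 *: (Lam_mk lam *m H_ U X 0%N *m C 0%N) + Psi_ U X Xi 0%N *m C 0%N.
Proof. by split=> [[|t] _ //|]; [exact: HC_rec | exact: HC_rec0]. Qed.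

End ANPM.

Theorem lemma1 (R : realType) (k m : nat) (eps beta : R)
  (A U : 'M[R]_(k + m)) (lam : 'I_(k + m) -> R)
  (X0 : 'M[R]_(k + m, k)) (X Xi : nat -> 'M[R]_(k + m, k)) (Rs : nat -> 'M[R]_k) :
  (* d = k + m > k >= 1 *)
  (0 < k)%N -> (0 < m)%N ->
  0 < eps < 1 ->
  (* A symmetric positive semidefinite *)
  A^T = A ->
  (forall v : 'cV[R]_(k + m), 0 <= (v^T *m A *m v) 0 0) ->
  (* eigenvalues lam_1 >= ... >= lam_d >= 0, orthonormal eigenvectors u_i = col i U *)
  U^T *m U = 1%:M ->
  (forall i : 'I_(k + m), A *m col i U = lam i *: col i U) ->
  (forall i j : 'I_(k + m), (i <= j)%N -> lam j <= lam i) ->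
  (forall i : 'I_(k + m), 0 <= lam i) ->
  lambda_ lam k > lambda_ lam k.+1 ->
  0 < beta ->
  lambda_ lam k.+1 <= 2 * Num.sqrt beta < lambda_ lam k ->
  (* X_0 in St(d,k) with cos theta_k(U_k, X_0) > 0 *)
  X0^T *m X0 = 1%:M ->
  cos (theta_k (lsubmx U) X0) > 0 ->
  (* ANPM iteration *)
  X 0%N = X0 ->
  is_QR (2^-1 *: (A *m X 0%N) + Xi 0%N) (X 1%N) (Rs 1%N) ->
  (forall t : nat, (1 <= t)%N ->
     is_QR (A *m X t - beta *: (X t.-1 *m invmx (Rs t)) + Xi t) (X t.+1) (Rs t.+1)) ->
  (* perturbation bounds, c = 1/32 *)
  (forall t : nat,
     spec_norm ((rsubmx U)^T *m Xi t)
       <= 32^-1 * (lambda_ lam k - 2 * Num.sqrt beta) * eps) ->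
  (forall t : nat,
     spec_norm ((lsubmx U)^T *m Xi t)
       <= 32^-1 * (lambda_ lam k - 2 * Num.sqrt beta) * cos (theta_k (lsubmx U) (X t))) ->
  (forall t : nat, (1 <= t)%N ->
     H_ U X t.+1 *m C_ U lam beta X Xi t.+1
     = Lam_mk lam *m H_ U X t *m C_ U lam beta X Xi t
       - beta *: (H_ U X t.-1 *m C_ U lam beta X Xi t.-1)
       + Psi_ U X Xi t *m C_ U lam beta X Xi t)
  /\
  H_ U X 1%N *m C_ U lam beta X Xi 1%N
  = 2^-1 *: (Lam_mk lam *m H_ U X 0%N *m C_ U lam beta X Xi 0%N)
    + Psi_ U X Xi 0%N *m C_ U lam beta X Xi 0%N.
Proof.
move=> k_gt0 _ _ A_sym _ U_orth U_eigen lam_nonincr _ _ beta_gt0 /andP[_ gap]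
  X0_orth cos0_gt0 X0_eq QR0 QRS _ Xi_bound.
rewrite -X0_eq in X0_orth cos0_gt0.
exact: HC_recurrences k_gt0 A_sym U_orth U_eigen lam_nonincr beta_gt0 gap
  X0_orth cos0_gt0 QR0 QRS Xi_bound.
Qed.
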